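(* Let $v\geq 8$ be even. If a symmetric configuration $v_3$ has no blocking set, then its Levi graph is not Hamiltonian.
   Context: A symmetric configuration $v_3$ consists of a set of $v$ points and a collection of $v$ blocks, each block being a 3-element subset of the points, such that every point lies in exactly 3 blocks and any two distinct points lie in at most one common block. Its Levi graph is the bipartite graph whose vertices are the points and blocks, a point being adjacent to each block containing it. A blocking set is a subset $Q$ of the points such that every block contains at least one point of $Q$ and at least one point not in $Q$. *)

From mathcomp Require Import all_boot.
Set Implicit Arguments. Unset Strict Implicit. Unset Printing Implicit Defensive.

Definition sym_config_3 (T : finType) (blocks : {set {set T}}) : Prop :=
  [/\ #|blocks| = #|T|,
      (forall b, b \in blocks -> #|b| = 3),
      (forall x : T, #|[set b in blocks | x \in b]| = 3) &
      (forall x y : T, x != y -> #|[set b in blocks | (x \in b) && (y \in b)]| <= 1)].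

Definition blocking_set (T : finType) (blocks : {set {set T}}) (Q : {set T}) : Prop :=
  forall b, b \in blocks ->
    (exists2 x, x \in b & x \in Q) /\ (exists2 y, y \in b & y \notin Q).

(* Levi graph: vertices are points (inl) and blocks (inr), on the type
   T + {set T}; vertex set and adjacency. *)
Definition levi_vertices (T : finType) (blocks : {set {set T}}) : {set T + {set T}} :=
  [set u | match u with inl _ => true | inr b => b \in blocks end].

Definition levi_adj (T : finType) (blocks : {set {set T}}) : rel (T + {set T}) :=
  fun u w => match u, w with
  | inl x, inr b => (b \in blocks) && (x \in b)
  | inr b, inl x => (b \in blocks) && (x \in b)
  | _, _ => false
  end.

Definition hamiltonian (V : finType) (S : {set V}) (e : rel V) : Prop :=
  exists s : seq V, [/\ uniq s, (forall u, (u \in s) = (u \in S)),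
                        3 <= size s & cycle e s].

From mathcomp Require Import all_boot.
From mathcomp Require Import zify.

(* The Levi graph is bipartite with v + v = 2v vertices, so a Hamiltonian
   cycle s alternates points and blocks and has length 2v, a multiple of 4
   when v is even.  Colour a vertex by the position of its index modulo 4:
   "front" if the index is 0 or 1 mod 4, "back" if it is 2 or 3.  The two
   neighbours of a block on the cycle are points whose indices differ by 2
   modulo the length, hence (as 4 divides the length) they get opposite
   colours.  The front points therefore meet every block, and so do the
   back points: they form a blocking set. *)

Lemma index_next (V : eqType) (s : seq V) (x : V) :
  uniq s -> x \in s -> index (next s x) s = (index x s).+1 %% size s.
Proof.
case: s => // y p s_uniq x_in; rewrite next_nth x_in.
have x_lt : index x (y :: p) < (size p).+1 by rewrite index_mem.
case: (ltnP (index x (y :: p)) (size p)) => x_pos.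
  have -> : nth y p (index x (y :: p)) = nth y (y :: p) (index x (y :: p)).+1
    by [].
  by rewrite index_uniq // modn_small.
have x_last : index x (y :: p) = size p.
  by apply/eqP; rewrite eqn_leq x_pos andbT -ltnS.
by rewrite nth_default ?x_last //= eqxx modnn.
Qed.

Lemma index_next2 (V : eqType) (s : seq V) (x : V) :
  uniq s -> x \in s -> index (next s (next s x)) s = (index x s).+2 %% size s.
Proof.
move=> s_uniq x_in.
rewrite index_next ?mem_next // index_next // -[(_ %% _).+1]addn1 modnDml.
by rewrite addn1.
Qed.

Lemma mod4_shift2 (n i : nat) :
  4 %| n -> ((i.+2 %% n) %% 4 < 2) = ~~ (i %% 4 < 2).
Proof. by move=> n4; rewrite (modn_dvdm _ n4); lia. Qed.

Definition front_half {V : eqType} (s : seq V) (u : V) : bool :=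
  index u s %% 4 < 2.

Lemma front_half_next2 {V : eqType} {s : seq V} {x : V} :
  uniq s -> 4 %| size s -> x \in s ->
  front_half s (next s (next s x)) = ~~ front_half s x.
Proof. by move=> s_uniq s4 x_in; rewrite /front_half index_next2 // mod4_shift2. Qed.

Section LeviGraph.

Variables (T : finType) (blocks : {set {set T}}).

Lemma levi_adj_sym : symmetric (levi_adj blocks).
Proof. by case=> [x|b] [y|c]. Qed.

Lemma levi_adj_block {u : T + {set T}} {b : {set T}} :
  levi_adj blocks u (inr b) -> exists2 x, u = inl x & x \in b.
Proof. by case: u => // x /andP [_ x_b]; exists x. Qed.

Lemma levi_card : #|levi_vertices blocks| = #|T| + #|blocks|.
Proof.
have inl_inj : injective (@inl T {set T}) by move=> ? ? [].
have inr_inj : injective (@inr T {set T}) by move=> ? ? [].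
have -> : levi_vertices blocks = inl @: [set: T] :|: inr @: blocks.
  apply/setP => -[x|b]; rewrite !inE /=.
    by rewrite mem_imset ?inE.
  by rewrite mem_imset //; case: imsetP => // -[? _ []].
have disjoint : inl @: [set: T] :&: inr @: blocks = set0.
  by apply/setP => u; rewrite !inE; apply/andP => -[/imsetP [? _ ->] /imsetP [?]].
by rewrite cardsU disjoint cards0 subn0 !card_imset ?cardsT.
Qed.

Lemma levi_cycle_blocking (s : seq (T + {set T})) :
  uniq s -> cycle (levi_adj blocks) s -> 4 %| size s ->
  (forall b, b \in blocks -> inr b \in s) ->
  blocking_set blocks [set x | front_half s (inl x)].
Proof.
move=> s_uniq s_cycle s4 s_blocks b b_in.
have b_s := s_blocks b b_in.
have [x xE x_b] := levi_adj_block (prev_cycle s_cycle b_s).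
have [y yE y_b] :=
  levi_adj_block (etrans (levi_adj_sym _ _) (next_cycle s_cycle b_s)).
have x_s : inl x \in s by rewrite -xE mem_prev.
have yx : inl y = next s (next s (inl x)) by rewrite -xE next_prev.
have flip := front_half_next2 s_uniq s4 x_s; rewrite -yx in flip.
case x_front : (front_half s (inl x)) in flip.
  by split; [exists x | exists y]; rewrite // inE ?flip ?x_front.
by split; [exists y | exists x]; rewrite // inE ?flip ?x_front.
Qed.

End LeviGraph.

Theorem mainTheorem11 (T : finType) (blocks : {set {set T}}) :
  ~~ odd #|T| -> 8 <= #|T| ->
  sym_config_3 blocks ->
  ~ (exists Q : {set T}, blocking_set blocks Q) ->
  ~ hamiltonian (levi_vertices blocks) (levi_adj blocks).
Proof.
move=> T_even _ [card_blocks _ _ _] no_blocking [s [s_uniq s_all _ s_cycle]].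
have size_s : size s = #|T| + #|T|.
  by rewrite -(card_uniqP s_uniq) (eq_card s_all) levi_card card_blocks.
apply: no_blocking; exists [set x | front_half s (inl x)].
apply: levi_cycle_blocking => //.
- by rewrite size_s; move: T_even; rewrite -dvdn2; lia.
- by move=> b b_in; rewrite s_all inE.
Qed.
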